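(* Let $S$ be a semilattice and $\omega$ a submultiplicative weight on $S$ such that $(S,\omega)$ is flighty. Then $\ell^1_\omega(S)$ is AMNM. (In particular this holds whenever $\omega$ is bounded, and whenever $S$ has finite breadth — e.g. finite width or finite height — for every submultiplicative weight $\omega$.)
   Context: A semilattice is a commutative semigroup in which every element is idempotent. A weight is $\omega:S\to(0,\infty)$, submultiplicative if $\omega(xy)\le\omega(x)\omega(y)$. $\ell^1_\omega(S)$ is the Banach space of $a:S\to\mathbb C$ with $\|a\|=\sum_s|a(s)|\omega(s)<\infty$ with convolution product ($\delta_x*\delta_y=\delta_{xy}$). For $E\subseteq S$, $\langle E\rangle$ is the subsemigroup generated by $E$ and $\langle E\rangle_n=\{x_1\cdots x_n: x_i\in E\}$. The breadth of $S$ is $\sup_{E\subseteq S}\inf\{n:\langle E\rangle_n=\langle E\rangle\}$. For $K>0$ let $W_K=\{x\in S:\omega(x)\le K\}$; $(S,\omega)$ is flighty if for every $K>0$, $\sup\{\omega(y): y\in\langle W_K\rangle\}<\infty$. For a bounded linear map $T$ between Banach algebras, $\operatorname{def}(T)=\sup\{\|T(xy)-T(x)T(y)\|:\|x\|,\|y\|\le1\}$. A Banach algebra $A$ is AMNM if for every $\varepsilon>0$ there is $\delta>0$ such that every $\psi\in A^*$ with $\operatorname{def}(\psi)\le\delta$ is within distance $\varepsilon$ (in $A^*$) of a bounded multiplicative linear functional (possibly $0$). *)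

From Stdlib Require Import Reals List.
Import ListNotations.
Open Scope R_scope.

Record Cx : Type := mkC { Re : R; Im : R }.
Definition C0 : Cx := mkC 0 0.
Definition Cadd (z w : Cx) : Cx := mkC (Re z + Re w) (Im z + Im w).
Definition Csub (z w : Cx) : Cx := mkC (Re z - Re w) (Im z - Im w).
Definition Cmul (z w : Cx) : Cx :=
  mkC (Re z * Re w - Im z * Im w) (Re z * Im w + Im z * Re w).
Definition Cnorm (z : Cx) : R := sqrt (Re z * Re z + Im z * Im z).

Definition sumR {I : Type} (f : I -> R) (F : list I) : R :=
  fold_right (fun i acc => f i + acc) 0 F.
Definition sumC {I : Type} (f : I -> Cx) (F : list I) : Cx :=
  fold_right (fun i acc => Cadd (f i) acc) C0 F.

(** Unconditional summation of an arbitrary family (net of finite subsets). *)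
Definition Chas_sum {I : Type} (f : I -> Cx) (l : Cx) : Prop :=
  forall eps, 0 < eps -> exists F0 : list I, forall F : list I,
      NoDup F -> incl F0 F -> Cnorm (Csub (sumC f F) l) < eps.

Definition is_semilattice (S : Type) (op : S -> S -> S) : Prop :=
  (forall x y z, op x (op y z) = op (op x y) z) /\
  (forall x y, op x y = op y x) /\
  (forall x, op x x = x).

Definition is_weight {S : Type} (w : S -> R) : Prop := forall s, 0 < w s.

Definition submultiplicative {S : Type} (op : S -> S -> S) (w : S -> R) : Prop :=
  forall x y, w (op x y) <= w x * w y.

Inductive gen {S : Type} (op : S -> S -> S) (E : S -> Prop) : S -> Prop :=
| gen_base : forall x, E x -> gen op E x
| gen_mul : forall x y, gen op E x -> gen op E y -> gen op E (op x y).

Definition W_K {S : Type} (w : S -> R) (K : R) : S -> Prop := fun x => w x <= K.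

Definition flighty {S : Type} (op : S -> S -> S) (w : S -> R) : Prop :=
  forall K, 0 < K -> exists B : R, forall y, gen op (W_K w K) y -> w y <= B.

(** [l1_norm_le w a r] : the norm sum_s |a s| w s is at most r
    (the sum of a nonnegative family is the sup of its finite partial sums). *)
Definition l1_norm_le {S : Type} (w : S -> R) (a : S -> Cx) (r : R) : Prop :=
  forall F : list S, NoDup F -> sumR (fun s => Cnorm (a s) * w s) F <= r.

Definition in_l1 {S : Type} (w : S -> R) (a : S -> Cx) : Prop :=
  exists r, l1_norm_le w a r.

Definition l1 {S : Type} (w : S -> R) : Type := { a : S -> Cx | in_l1 w a }.

(** Convolution: (a*b)(s) = sum_{x y = s} a(x) b(y), i.e. delta_x * delta_y = delta_{xy}. *)
Definition is_conv {S : Type} (op : S -> S -> S) (a b c : S -> Cx) : Prop :=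
  forall s, Chas_sum (fun p : { p : S * S | op (fst p) (snd p) = s } =>
                        Cmul (a (fst (proj1_sig p))) (b (snd (proj1_sig p)))) (c s).

Definition bounded_linear {S : Type} (w : S -> R) (psi : l1 w -> Cx) : Prop :=
  (forall a b c : l1 w,
      (forall s, proj1_sig c s = Cadd (proj1_sig a s) (proj1_sig b s)) ->
      psi c = Cadd (psi a) (psi b)) /\
  (forall (lam : Cx) (a c : l1 w),
      (forall s, proj1_sig c s = Cmul lam (proj1_sig a s)) ->
      psi c = Cmul lam (psi a)) /\
  (exists M : R, forall (a : l1 w) r, l1_norm_le w (proj1_sig a) r ->
      Cnorm (psi a) <= M * r).

Definition defect_le {S : Type} (op : S -> S -> S) (w : S -> R)
  (psi : l1 w -> Cx) (delta : R) : Prop :=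
  forall a b c : l1 w,
    l1_norm_le w (proj1_sig a) 1 -> l1_norm_le w (proj1_sig b) 1 ->
    is_conv op (proj1_sig a) (proj1_sig b) (proj1_sig c) ->
    Cnorm (Csub (psi c) (Cmul (psi a) (psi b))) <= delta.

(** bounded multiplicative linear functional (possibly 0) *)
Definition multiplicative_functional {S : Type} (op : S -> S -> S) (w : S -> R)
  (phi : l1 w -> Cx) : Prop :=
  bounded_linear w phi /\
  (forall a b c : l1 w,
      is_conv op (proj1_sig a) (proj1_sig b) (proj1_sig c) ->
      phi c = Cmul (phi a) (phi b)).

Definition dual_dist_le {S : Type} (w : S -> R) (psi phi : l1 w -> Cx) (eps : R) : Prop :=
  forall a : l1 w, l1_norm_le w (proj1_sig a) 1 ->
    Cnorm (Csub (psi a) (phi a)) <= eps.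

Definition AMNM_l1 {S : Type} (op : S -> S -> S) (w : S -> R) : Prop :=
  forall eps, 0 < eps -> exists delta, 0 < delta /\
    forall psi : l1 w -> Cx, bounded_linear w psi -> defect_le op w psi delta ->
      exists phi : l1 w -> Cx, multiplicative_functional op w phi /\
        dual_dist_le w psi phi eps.

From Stdlib Require Import Reals Lra Lia Psatz List Permutation.
From Stdlib Require Import Classical ClassicalEpsilon ProofIrrelevance FunctionalExtensionality.
Import ListNotations.
Open Scope R_scope.

(** Let [psi] be a bounded functional on l^1_w(S) of defect at most [delta], and
  let [u s = psi delta_s] be its values on point masses.
  - [psi] is determined by [u]: psi(a) = sum_s a(s) u(s) ([psi_expand]), and
    testing the defect on normalised point masses gives
    |u(xy) - u(x)u(y)| <= delta w(x) w(y) ([point_defect]).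
  - On the subsemilattice G generated by W_K = {w <= K} the weight is bounded
    (flightiness), so [u] is uniformly almost multiplicative on G.  Each u(x),
    x in G, is then almost idempotent, hence close to 0 or to 1, and the set of
    x in G with u(x) close to 1 is closed under products.  The indicator of the
    filter it generates is a semicharacter [chi] close to [u] on W_K; off W_K
    the weight is large and u(s) is small compared with w(s)
    ([almost_multiplicative_stability]).
  - A semicharacter with values in the unit disc defines a bounded
    multiplicative functional phi(a) = sum_s chi(s) a(s) (weights on a
    semilattice are >= 1), and |u - chi| <= eps w gives ||psi - phi|| <= eps. *)

(** * Complex numbers *)

Definition Cr (r : R) : Cx := mkC r 0.
Definition C1 : Cx := Cr 1.

Lemma Cext z w : Re z = Re w -> Im z = Im w -> z = w.
Proof. destruct z, w; simpl; intros; subst; reflexivity. Qed.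

(** Identities between complex expressions are ring identities on components. *)
Ltac Csolve := apply Cext; unfold Cadd, Csub, Cmul, Cr, C1, C0; simpl; ring.

Lemma sqrt_le_sq x y : 0 <= y -> x <= y * y -> sqrt x <= y.
Proof.
  intros Hy Hx. destruct (Rle_dec x 0) as [H|H].
  - rewrite sqrt_neg_0; lra.
  - rewrite <- (sqrt_square y Hy). apply sqrt_le_1_alt; lra.
Qed.

Lemma Cnorm_nonneg z : 0 <= Cnorm z.
Proof. apply sqrt_pos. Qed.

Lemma Cnorm_sq z : Cnorm z * Cnorm z = Re z * Re z + Im z * Im z.
Proof. unfold Cnorm. apply sqrt_sqrt. nra. Qed.

Lemma Re_le z : Rabs (Re z) <= Cnorm z.
Proof.
  unfold Cnorm. rewrite <- sqrt_Rsqr_abs. apply sqrt_le_1_alt. unfold Rsqr. nra.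
Qed.

Lemma Im_le z : Rabs (Im z) <= Cnorm z.
Proof.
  unfold Cnorm. rewrite <- sqrt_Rsqr_abs. apply sqrt_le_1_alt. unfold Rsqr. nra.
Qed.

Lemma Cnorm_le_ReIm z : Cnorm z <= Rabs (Re z) + Rabs (Im z).
Proof.
  unfold Cnorm. pose proof (Rabs_pos (Re z)); pose proof (Rabs_pos (Im z)).
  apply sqrt_le_sq; [lra |].
  assert (Rabs (Re z) * Rabs (Re z) = Re z * Re z)
    by (rewrite <- Rabs_mult; apply Rabs_right; nra).
  assert (Rabs (Im z) * Rabs (Im z) = Im z * Im z)
    by (rewrite <- Rabs_mult; apply Rabs_right; nra).
  nra.
Qed.

Lemma Cnorm_dot z w : Re z * Re w + Im z * Im w <= Cnorm z * Cnorm w.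
Proof.
  pose proof (Cnorm_sq z); pose proof (Cnorm_sq w).
  pose proof (Cnorm_nonneg z); pose proof (Cnorm_nonneg w).
  assert (Hsq : (Re z * Re w + Im z * Im w) * (Re z * Re w + Im z * Im w)
                <= (Cnorm z * Cnorm w) * (Cnorm z * Cnorm w)).
  { replace ((Cnorm z * Cnorm w) * (Cnorm z * Cnorm w))
      with ((Cnorm z * Cnorm z) * (Cnorm w * Cnorm w)) by ring.
    rewrite H, H0. pose proof (Rle_0_sqr (Re z * Im w - Im z * Re w)). unfold Rsqr in *. nra. }
  pose proof (Rmult_le_pos _ _ H1 H2). nra.
Qed.

Lemma Cnorm_triangle z w : Cnorm (Cadd z w) <= Cnorm z + Cnorm w.
Proof.
  unfold Cnorm at 1. pose proof (Cnorm_dot z w).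
  pose proof (Cnorm_sq z); pose proof (Cnorm_sq w).
  pose proof (Cnorm_nonneg z); pose proof (Cnorm_nonneg w).
  apply sqrt_le_sq; simpl; nra.
Qed.

Lemma Cnorm_mul z w : Cnorm (Cmul z w) = Cnorm z * Cnorm w.
Proof.
  unfold Cnorm. rewrite <- sqrt_mult by nra. f_equal.
  destruct z, w; simpl; ring.
Qed.

Lemma Cnorm_sub_sym z w : Cnorm (Csub z w) = Cnorm (Csub w z).
Proof. unfold Cnorm. f_equal. destruct z, w; simpl; ring. Qed.

Lemma Cnorm_Cr r : Cnorm (Cr r) = Rabs r.
Proof. unfold Cnorm, Cr; simpl. rewrite <- sqrt_Rsqr_abs. f_equal. unfold Rsqr. ring. Qed.

Lemma Cnorm_C0 : Cnorm C0 = 0.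
Proof. unfold Cnorm, C0; simpl. replace (0 * 0 + 0 * 0) with 0 by ring. apply sqrt_0. Qed.

Lemma Cnorm_C1 : Cnorm C1 = 1.
Proof. unfold C1. rewrite Cnorm_Cr. apply Rabs_R1. Qed.

Lemma Cnorm_sub_tri z w v : Cnorm (Csub z v) <= Cnorm (Csub z w) + Cnorm (Csub w v).
Proof.
  replace (Csub z v) with (Cadd (Csub z w) (Csub w v)) by Csolve. apply Cnorm_triangle.
Qed.

Lemma Cnorm_sub_C0 z : Cnorm (Csub z C0) = Cnorm z.
Proof. f_equal. Csolve. Qed.

Lemma Cnorm_sub_le z w : Cnorm (Csub z w) <= Cnorm z + Cnorm w.
Proof.
  pose proof (Cnorm_sub_tri z C0 w). rewrite (Cnorm_sub_sym C0 w), !Cnorm_sub_C0 in H.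
  exact H.
Qed.

Lemma Cnorm_ge_sub z w : Cnorm z - Cnorm w <= Cnorm (Csub z w).
Proof.
  pose proof (Cnorm_sub_tri z w C0). rewrite !Cnorm_sub_C0 in H. lra.
Qed.

Lemma Cnorm_near1 z : 1 - Cnorm (Csub C1 z) <= Cnorm z <= 1 + Cnorm (Csub C1 z).
Proof.
  pose proof (Cnorm_ge_sub C1 z). pose proof (Cnorm_ge_sub z C1).
  rewrite Cnorm_C1, (Cnorm_sub_sym z C1) in *. lra.
Qed.

Lemma Cnorm_eq0 z w : Cnorm (Csub z w) = 0 -> z = w.
Proof.
  unfold Cnorm. intro H. destruct z as [a b], w as [c d]; unfold Csub in H; simpl in *.
  pose proof (Rle_0_sqr (a - c)); pose proof (Rle_0_sqr (b - d)); unfold Rsqr in *.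
  apply sqrt_eq_0 in H; [| lra].
  apply Cext; simpl; nra.
Qed.

(** * Finite sums over lists *)

Definition deq {T : Type} (x y : T) : {x = y} + {x <> y} :=
  excluded_middle_informative (x = y).
Definition memb {T : Type} (F : list T) (x : T) : bool :=
  if in_dec deq x F then true else false.
Definition notin {T : Type} (F : list T) (x : T) : bool := negb (memb F x).

Lemma memb_true {T} (F : list T) x : memb F x = true <-> In x F.
Proof. unfold memb. destruct (in_dec deq x F); split; intros; auto; discriminate. Qed.

Lemma memb_false {T} (F : list T) x : memb F x = false <-> ~ In x F.
Proof.
  unfold memb. destruct (in_dec deq x F); split; intros; auto; try discriminate; contradiction.
Qed.

Lemma notin_true {T} (F : list T) x : notin F x = true <-> ~ In x F.
Proof. unfold notin. rewrite Bool.negb_true_iff. apply memb_false. Qed.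

Lemma incl_nodup_l {T} (F1 F2 : list T) : incl F1 (nodup deq (F1 ++ F2)).
Proof. intros x Hx. apply nodup_In. apply in_or_app. auto. Qed.

Lemma incl_nodup_r {T} (F1 F2 : list T) : incl F2 (nodup deq (F1 ++ F2)).
Proof. intros x Hx. apply nodup_In. apply in_or_app. auto. Qed.

Section Sums.
Context {T : Type}.

Lemma sumR_app (f : T -> R) l1 l2 : sumR f (l1 ++ l2) = sumR f l1 + sumR f l2.
Proof. induction l1; simpl; [ring | rewrite IHl1; ring]. Qed.

Lemma sumC_app (f : T -> Cx) l1 l2 : sumC f (l1 ++ l2) = Cadd (sumC f l1) (sumC f l2).
Proof. induction l1; simpl; [| rewrite IHl1]; Csolve. Qed.

Lemma sumR_ext (f g : T -> R) l : (forall x, In x l -> f x = g x) -> sumR f l = sumR g l.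
Proof. induction l; simpl; intros; auto. rewrite H, IHl; auto. Qed.

Lemma sumR_le (f g : T -> R) l : (forall x, In x l -> f x <= g x) -> sumR f l <= sumR g l.
Proof.
  induction l; simpl; intros H; [lra |].
  pose proof (H a (or_introl eq_refl)). assert (sumR f l <= sumR g l) by auto. lra.
Qed.

Lemma sumR_nonneg (f : T -> R) l : (forall x, 0 <= f x) -> 0 <= sumR f l.
Proof. induction l; simpl; intros H; [lra |]. pose proof (H a). pose proof (IHl H). lra. Qed.

Lemma sumR_perm (f : T -> R) l l' : Permutation l l' -> sumR f l = sumR f l'.
Proof. induction 1; simpl; lra. Qed.

Lemma sumC_perm (f : T -> Cx) l l' : Permutation l l' -> sumC f l = sumC f l'.
Proof. induction 1; simpl; [reflexivity | rewrite IHPermutation | Csolve | congruence]; reflexivity. Qed.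

Lemma sumR_filter (f : T -> R) (p : T -> bool) l :
  sumR f l = sumR f (filter p l) + sumR f (filter (fun x => negb (p x)) l).
Proof. induction l; simpl; [ring |]. destruct (p a); simpl; rewrite IHl; ring. Qed.

Lemma sumC_filter (f : T -> Cx) (p : T -> bool) l :
  sumC f l = Cadd (sumC f (filter p l)) (sumC f (filter (fun x => negb (p x)) l)).
Proof. induction l; simpl; [Csolve |]. destruct (p a); simpl; rewrite IHl; Csolve. Qed.

Lemma sumC_add (f g : T -> Cx) l :
  sumC (fun x => Cadd (f x) (g x)) l = Cadd (sumC f l) (sumC g l).
Proof. induction l; simpl; [| rewrite IHl]; Csolve. Qed.

Lemma sumC_scal (z : Cx) (f : T -> Cx) l : sumC (fun x => Cmul z (f x)) l = Cmul z (sumC f l).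
Proof. induction l; simpl; [| rewrite IHl]; Csolve. Qed.

Lemma sumR_scal (c : R) (f : T -> R) l : sumR (fun x => c * f x) l = c * sumR f l.
Proof. induction l; simpl; [| rewrite IHl]; ring. Qed.

Lemma sumC_norm (f : T -> Cx) l : Cnorm (sumC f l) <= sumR (fun x => Cnorm (f x)) l.
Proof.
  induction l; simpl; [rewrite Cnorm_C0; lra |].
  eapply Rle_trans; [apply Cnorm_triangle | lra].
Qed.

Lemma sumC_zero (f : T -> Cx) l : (forall x, In x l -> f x = C0) -> sumC f l = C0.
Proof. induction l; simpl; intros; auto. rewrite H, IHl; auto. Csolve. Qed.

Lemma filter_memb_perm (F G : list T) : NoDup F -> NoDup G -> incl F G ->
  Permutation (filter (memb F) G) F.
Proof.
  intros. apply NoDup_Permutation; auto. apply NoDup_filter; auto.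
  intros x. rewrite filter_In, memb_true. split; [tauto | intro; split; auto].
Qed.

Lemma sumC_split (f : T -> Cx) F G : NoDup F -> NoDup G -> incl F G ->
  sumC f G = Cadd (sumC f F) (sumC f (filter (notin F) G)).
Proof.
  intros. rewrite (sumC_filter f (memb F) G), (sumC_perm _ _ _ (filter_memb_perm F G H H0 H1)).
  reflexivity.
Qed.

Lemma sumR_split (f : T -> R) F G : NoDup F -> NoDup G -> incl F G ->
  sumR f G = sumR f F + sumR f (filter (notin F) G).
Proof.
  intros. rewrite (sumR_filter f (memb F) G), (sumR_perm _ _ _ (filter_memb_perm F G H H0 H1)).
  reflexivity.
Qed.

Lemma sumR_nodup_le (f : T -> R) L : (forall x, 0 <= f x) -> sumR f (nodup deq L) <= sumR f L.
Proof.
  induction L; simpl; intros H; [lra |].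
  pose proof (H a). pose proof (IHL H). destruct (in_dec deq a L); simpl; lra.
Qed.

Lemma sumR_incl_le (f : T -> R) Q L : (forall x, 0 <= f x) -> NoDup Q -> incl Q L ->
  sumR f Q <= sumR f L.
Proof.
  intros Hf HQ HQL. eapply Rle_trans; [| apply sumR_nodup_le; auto].
  rewrite (sumR_split f Q (nodup deq L)); auto.
  - pose proof (sumR_nonneg f (filter (notin Q) (nodup deq L)) Hf). lra.
  - apply NoDup_nodup.
  - intros x Hx. apply nodup_In. auto.
Qed.

Lemma sumR_supp_le (f : T -> R) L G : (forall x, 0 <= f x) ->
  (forall x, ~ In x L -> f x = 0) -> NoDup G -> sumR f G <= sumR f L.
Proof.
  intros Hf HL HG. rewrite (sumR_filter f (memb L) G).
  assert (Hz : sumR f (filter (fun x : T => negb (memb L x)) G) = 0).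
  { transitivity (sumR (fun _ : T => 0) (filter (fun x : T => negb (memb L x)) G)).
    - apply sumR_ext. intros x Hx. apply filter_In in Hx as [_ Hx]. apply HL.
      apply memb_false. apply Bool.negb_true_iff. exact Hx.
    - induction (filter _ G) as [| ? ? IH]; simpl; [| rewrite IH]; ring. }
  rewrite Hz, Rplus_0_r. apply sumR_incl_le; auto.
  - apply NoDup_filter; auto.
  - intros x Hx. apply filter_In in Hx. apply memb_true. tauto.
Qed.
End Sums.

Lemma sumC_map {A B} (f : B -> Cx) (g : A -> B) l :
  sumC f (map g l) = sumC (fun x => f (g x)) l.
Proof. induction l; simpl; [| rewrite IHl]; reflexivity. Qed.

Lemma sumR_map {A B} (f : B -> R) (g : A -> B) l :
  sumR f (map g l) = sumR (fun x => f (g x)) l.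
Proof. induction l; simpl; [| rewrite IHl]; reflexivity. Qed.

Lemma sumR_prod {X Y} (f : X -> R) (g : Y -> R) A B :
  sumR (fun p => f (fst p) * g (snd p)) (list_prod A B) = sumR f A * sumR g B.
Proof.
  induction A; simpl; [ring |].
  rewrite sumR_app, IHA, sumR_map. simpl. rewrite sumR_scal. ring.
Qed.

(** * Unconditional sums *)

Definition abs_summable {T : Type} (f : T -> Cx) (M : R) : Prop :=
  forall G, NoDup G -> sumR (fun x => Cnorm (f x)) G <= M.

Lemma small_zero x : 0 <= x -> (forall eps, 0 < eps -> x < eps) -> x = 0.
Proof. intros. destruct (Rle_lt_or_eq_dec 0 x H); auto. specialize (H0 x r). lra. Qed.

(** Tails of a family of nonnegative reals with bounded finite sums are small:
    this is the completeness of the reals (a sup of finite sums exists). *)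
Lemma tail_small {T} (g : T -> R) M : (forall x, 0 <= g x) ->
  (forall G, NoDup G -> sumR g G <= M) -> forall eta, 0 < eta ->
  exists F0, NoDup F0 /\
    forall G, NoDup G -> (forall x, In x G -> ~ In x F0) -> sumR g G <= eta.
Proof.
  intros Hg HM eta Heta.
  set (E := fun r => exists F, NoDup F /\ r = sumR g F).
  assert (Hb : bound E) by (exists M; intros r [F [HF ->]]; auto).
  assert (He : exists x, E x) by (exists 0, nil; split; [constructor | reflexivity]).
  destruct (completeness E Hb He) as [m [Hub Hlub]].
  assert (Hnear : exists F, NoDup F /\ sumR g F > m - eta).
  { apply NNPP. intro Hn. assert (m <= m - eta); [| lra].
    apply Hlub. intros r [F [HF ->]]. apply Rnot_lt_le. intro.
    apply Hn. exists F; split; [exact HF | lra]. }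
  destruct Hnear as [F [HF HFm]]. exists F. split; auto. intros G HG Hd.
  assert (Hsum : E (sumR g (G ++ F))) by (exists (G ++ F); split; auto; apply NoDup_app; auto).
  apply Hub in Hsum. rewrite sumR_app in Hsum. lra.
Qed.

Lemma Chas_unique {T} (f : T -> Cx) l1 l2 : Chas_sum f l1 -> Chas_sum f l2 -> l1 = l2.
Proof.
  intros H1 H2. apply Cnorm_eq0, small_zero; [apply Cnorm_nonneg |]. intros eps He.
  destruct (H1 (eps / 2)) as [F1 HF1]; [lra |]. destruct (H2 (eps / 2)) as [F2 HF2]; [lra |].
  set (F := nodup deq (F1 ++ F2)).
  assert (A1 := HF1 F (NoDup_nodup _ _) (incl_nodup_l _ _)).
  assert (A2 := HF2 F (NoDup_nodup _ _) (incl_nodup_r _ _)).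
  pose proof (Cnorm_sub_tri l1 (sumC f F) l2). rewrite Cnorm_sub_sym in A1. lra.
Qed.

Lemma Chas_add {T} (f g : T -> Cx) l m : Chas_sum f l -> Chas_sum g m ->
  Chas_sum (fun x => Cadd (f x) (g x)) (Cadd l m).
Proof.
  intros H1 H2 eps He.
  destruct (H1 (eps / 2)) as [F1 HF1]; [lra |]. destruct (H2 (eps / 2)) as [F2 HF2]; [lra |].
  exists (F1 ++ F2). intros F HF Hi.
  assert (A1 := HF1 F HF (fun x h => Hi x (in_or_app _ _ _ (or_introl h)))).
  assert (A2 := HF2 F HF (fun x h => Hi x (in_or_app _ _ _ (or_intror h)))).
  rewrite sumC_add.
  replace (Csub (Cadd (sumC f F) (sumC g F)) (Cadd l m))
    with (Cadd (Csub (sumC f F) l) (Csub (sumC g F) m)) by Csolve.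
  pose proof (Cnorm_triangle (Csub (sumC f F) l) (Csub (sumC g F) m)). lra.
Qed.

Lemma Chas_scal {T} (z : Cx) (f : T -> Cx) l : Chas_sum f l ->
  Chas_sum (fun x => Cmul z (f x)) (Cmul z l).
Proof.
  intros H eps He. pose proof (Cnorm_nonneg z).
  destruct (H (eps / (Cnorm z + 1))) as [F0 HF0]; [apply Rdiv_lt_0_compat; lra |].
  exists F0. intros F HF Hi. specialize (HF0 F HF Hi). rewrite sumC_scal.
  replace (Csub (Cmul z (sumC f F)) (Cmul z l)) with (Cmul z (Csub (sumC f F) l)) by Csolve.
  rewrite Cnorm_mul. pose proof (Cnorm_nonneg (Csub (sumC f F) l)).
  apply Rle_lt_trans with ((Cnorm z + 1) * Cnorm (Csub (sumC f F) l)); [nra |].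
  apply Rmult_lt_reg_l with (/ (Cnorm z + 1)); [apply Rinv_0_lt_compat; lra |].
  rewrite <- Rmult_assoc, Rinv_l by lra. unfold Rdiv in HF0. lra.
Qed.

Lemma Chas_ext {T} (f g : T -> Cx) l : (forall x, f x = g x) -> Chas_sum f l -> Chas_sum g l.
Proof. intros. replace g with f; auto. apply functional_extensionality; auto. Qed.

Lemma Chas_bound {T} (f : T -> Cx) l M : Chas_sum f l -> abs_summable f M -> Cnorm l <= M.
Proof.
  intros H HM. apply Rnot_lt_le. intro Hlt.
  destruct (H (Cnorm l - M)) as [F0 HF0]; [lra |].
  set (F := nodup deq F0).
  specialize (HF0 F (NoDup_nodup _ _) (fun x h => proj2 (nodup_In _ _ _) h)).
  pose proof (HM F (NoDup_nodup deq F0)). pose proof (sumC_norm f F).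
  pose proof (Cnorm_ge_sub l (sumC f F)). rewrite Cnorm_sub_sym in HF0. lra.
Qed.

Lemma Chas_finite {T} (f : T -> Cx) L : NoDup L -> (forall x, ~ In x L -> f x = C0) ->
  Chas_sum f (sumC f L).
Proof.
  intros HL Hz eps He. exists L. intros F HF Hi.
  rewrite (sumC_split f L F HL HF Hi), (sumC_zero f (filter (notin L) F)).
  - replace (Csub (Cadd (sumC f L) C0) (sumC f L)) with C0 by Csolve. rewrite Cnorm_C0; lra.
  - intros x Hx. apply filter_In in Hx. apply Hz. apply notin_true. tauto.
Qed.

Lemma abs_summable_tails {T} (f : T -> Cx) M : abs_summable f M ->
  exists Fn : nat -> list T, forall n G, NoDup G -> incl (Fn n) G ->
    Cnorm (Csub (sumC f G) (sumC f (Fn n))) <= / (INR n + 1).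
Proof.
  intros HM.
  assert (Ht : forall n : nat, exists F, NoDup F /\
     forall G, NoDup G -> (forall x, In x G -> ~ In x F) ->
       sumR (fun x => Cnorm (f x)) G <= / (INR n + 1)).
  { intro n. apply (tail_small _ M); [intros; apply Cnorm_nonneg | exact HM |].
    apply Rinv_0_lt_compat. pose proof (pos_INR n); lra. }
  destruct (choice _ Ht) as [Fn HFn]. exists Fn. intros n G HG Hi.
  destruct (HFn n) as [HN Htail].
  rewrite (sumC_split f (Fn n) G HN HG Hi).
  replace (Csub (Cadd (sumC f (Fn n)) (sumC f (filter (notin (Fn n)) G))) (sumC f (Fn n)))
    with (sumC f (filter (notin (Fn n)) G)) by Csolve.
  eapply Rle_trans; [apply sumC_norm | apply Htail].
  - apply NoDup_filter; auto.
  - intros x Hx. apply filter_In in Hx. apply notin_true. tauto.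
Qed.

Lemma inv_succ_lt n N : (0 < N)%nat -> (n >= N)%nat -> / (INR n + 1) < / INR N.
Proof.
  intros. apply Rinv_lt_contravar.
  - apply Rmult_lt_0_compat; [apply lt_0_INR; lia | pose proof (pos_INR n); lra].
  - apply le_INR in H0. lra.
Qed.

(** Completeness of the complex plane: a net of partial sums that is Cauchy
    along the lists [Fn n] converges. *)
Lemma Chas_of_tails {T} (f : T -> Cx) (Fn : nat -> list T) :
  (forall n G, NoDup G -> incl (Fn n) G ->
     Cnorm (Csub (sumC f G) (sumC f (Fn n))) <= / (INR n + 1)) ->
  exists l, Chas_sum f l.
Proof.
  intros Key. set (s := fun n => sumC f (Fn n)).
  assert (Cau : forall n m, Cnorm (Csub (s n) (s m)) <= / (INR n + 1) + / (INR m + 1)).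
  { intros n m. unfold s. set (H := nodup deq (Fn n ++ Fn m)).
    pose proof (Key n H (NoDup_nodup _ _) (incl_nodup_l _ _)).
    pose proof (Key m H (NoDup_nodup _ _) (incl_nodup_r _ _)).
    pose proof (Cnorm_sub_tri (sumC f (Fn n)) (sumC f H) (sumC f (Fn m))).
    rewrite Cnorm_sub_sym in H0. lra. }
  assert (Cc : forall p : Cx -> R, (forall z, Rabs (p z) <= Cnorm z) ->
      (forall z w, p (Csub z w) = p z - p w) -> Cauchy_crit (fun n => p (s n))).
  { intros p Hp Hpl eps He. destruct (archimed_cor1 (eps / 2)) as [N [HN1 HN2]]; [lra |].
    exists N. intros n m Hn Hm. unfold Rdist. rewrite <- Hpl.
    eapply Rle_lt_trans; [apply Hp |]. eapply Rle_lt_trans; [apply Cau |].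
    pose proof (inv_succ_lt n N HN2 Hn). pose proof (inv_succ_lt m N HN2 Hm). lra. }
  destruct (R_complete _ (Cc Re Re_le (fun z w => eq_refl))) as [lr Hlr].
  destruct (R_complete _ (Cc Im Im_le (fun z w => eq_refl))) as [li Hli].
  exists (mkC lr li). intros eps He.
  destruct (Hlr (eps / 4)) as [N1 HN1]; [lra |]. destruct (Hli (eps / 4)) as [N2 HN2]; [lra |].
  destruct (archimed_cor1 (eps / 4)) as [N3 [HN3 HN3']]; [lra |].
  set (n := (N1 + N2 + N3)%nat). exists (Fn n). intros G HG Hi.
  pose proof (Key n G HG Hi).
  pose proof (inv_succ_lt n N3 HN3' ltac:(unfold n; lia)).
  specialize (HN1 n ltac:(unfold n; lia)). specialize (HN2 n ltac:(unfold n; lia)).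
  unfold Rdist in HN1, HN2.
  pose proof (Cnorm_le_ReIm (Csub (s n) (mkC lr li))) as HH. simpl in HH.
  pose proof (Cnorm_sub_tri (sumC f G) (s n) (mkC lr li)). unfold s in *. lra.
Qed.

Lemma Chas_exists {T} (f : T -> Cx) M : abs_summable f M -> exists l, Chas_sum f l.
Proof.
  intros HM. destruct (abs_summable_tails f M HM) as [Fn HFn]. exact (Chas_of_tails f Fn HFn).
Qed.

Section Fibres.
Context {P T : Type} (pi : P -> T) (h : P -> Cx) (d : T -> Cx).
Hypothesis fibre_sums : forall s, Chas_sum (fun q : {p | pi p = s} => h (proj1_sig q)) (d s).

Fixpoint fibre_part (s : T) (L : list P) : list {p | pi p = s} :=
  match L with
  | nil => nil
  | p :: L' => match deq (pi p) s with
               | left e => exist _ p e :: fibre_part s L'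
               | right _ => fibre_part s L'
               end
  end.

Lemma fibre_part_in s L p (e : pi p = s) : In p L -> In (exist _ p e) (fibre_part s L).
Proof.
  induction L; simpl; [tauto |]. intros [-> | H].
  - destruct (deq (pi p) s); [| contradiction]. left. f_equal. apply proof_irrelevance.
  - destruct (deq (pi a) s); auto. right; auto.
Qed.

Lemma fibre_val_inj s : FinFun.Injective (fun q : {p | pi p = s} => proj1_sig q).
Proof. intros [x ex] [y ey]; simpl; intros ->. f_equal. apply proof_irrelevance. Qed.

Lemma fibre_partial_sums (P0 : list P) eta : 0 < eta -> forall Ls, NoDup Ls ->
  exists Q, NoDup Q /\ (forall p, In p Q -> In (pi p) Ls) /\
    (forall p, In p P0 -> In (pi p) Ls -> In p Q) /\
    Cnorm (Csub (sumC d Ls) (sumC h Q)) <= eta * INR (length Ls).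
Proof.
  intros Heta. induction Ls as [| s Ls IH]; intros HN.
  - exists nil. simpl. split; [constructor | split; [tauto | split; [tauto |]]].
    replace (Csub C0 C0) with C0 by Csolve. rewrite Cnorm_C0. lra.
  - inversion HN as [| ? ? Hs HLs]; subst.
    destruct (IH HLs) as [Q [HQ1 [HQ2 [HQ3 HQ4]]]].
    destruct (fibre_sums s eta Heta) as [F0s HF0s].
    set (Fs := nodup deq (F0s ++ fibre_part s P0)).
    exists (map (@proj1_sig _ _) Fs ++ Q).
    assert (Hmap : forall p, In p (map (@proj1_sig _ _) Fs) -> pi p = s).
    { intros p Hp. apply in_map_iff in Hp. destruct Hp as [[q e] [<- _]]. exact e. }
    split; [| split; [| split]].
    + apply NoDup_app; auto.
      * apply FinFun.Injective_map_NoDup; [apply fibre_val_inj | apply NoDup_nodup].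
      * intros p Hp1 Hp2. apply Hmap in Hp1. apply HQ2 in Hp2. congruence.
    + intros p Hp. apply in_app_or in Hp as [Hp | Hp]; [left; symmetry; auto | right; auto].
    + intros p Hp Hps. apply in_or_app. destruct (deq (pi p) s) as [e | ne].
      * left. apply in_map_iff. exists (exist _ p e). split; auto.
        apply incl_nodup_r. apply fibre_part_in; auto.
      * right. apply HQ3; auto. destruct Hps; [congruence | auto].
    + specialize (HF0s Fs (NoDup_nodup _ _) (incl_nodup_l _ _)).
      simpl sumC. rewrite sumC_app, sumC_map.
      replace (Csub (Cadd (d s) (sumC d Ls)) (Cadd (sumC (fun x => h (proj1_sig x)) Fs) (sumC h Q)))
        with (Cadd (Csub (d s) (sumC (fun x => h (proj1_sig x)) Fs)) (Csub (sumC d Ls) (sumC h Q)))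
        by Csolve.
      eapply Rle_trans; [apply Cnorm_triangle |]. rewrite Cnorm_sub_sym.
      simpl length. rewrite S_INR. lra.
Qed.

Lemma Chas_fibres L : Chas_sum h L -> Chas_sum d L.
Proof.
  intros Hh eps He. destruct (Hh (eps / 2)) as [P0 HP0]; [lra |].
  exists (map pi P0). intros Ls HLs Hi.
  set (eta := eps / (2 * (INR (length Ls) + 1))).
  pose proof (pos_INR (length Ls)) as Hlen.
  assert (Heta : 0 < eta) by (apply Rdiv_lt_0_compat; lra).
  destruct (fibre_partial_sums P0 eta Heta Ls HLs) as [Q [HQ1 [_ [HQ3 HQ4]]]].
  assert (Hin : incl P0 Q) by (intros p Hp; apply HQ3; auto; apply Hi, in_map; auto).
  specialize (HP0 Q HQ1 Hin).
  pose proof (Cnorm_sub_tri (sumC d Ls) (sumC h Q) L).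
  assert (eta * INR (length Ls) <= eps / 2).
  { assert (eta * (INR (length Ls) + 1) = eps / 2) by (unfold eta; field; lra). nra. }
  lra.
Qed.
End Fibres.

Lemma Chas_transfer {Y Z} (tau : Z -> Y) (sigma : Y -> Z) (k : Y -> Cx) l :
  FinFun.Injective tau -> (forall y, tau (sigma y) = y) ->
  Chas_sum k l -> Chas_sum (fun z => k (tau z)) l.
Proof.
  intros Hinj Hs Hk eps He. destruct (Hk eps He) as [F0 HF0].
  exists (map sigma F0). intros G HG Hi.
  rewrite <- sumC_map. apply HF0; [apply FinFun.Injective_map_NoDup; auto |].
  intros y Hy. rewrite <- (Hs y). apply in_map, Hi, in_map; auto.
Qed.

Lemma abs_summable_prod {X Y} (f : X -> Cx) (g : Y -> Cx) Mf Mg :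
  abs_summable f Mf -> abs_summable g Mg ->
  abs_summable (fun p : X * Y => Cmul (f (fst p)) (g (snd p))) (Mf * Mg).
Proof.
  intros HMf HMg Q HQ.
  set (A := nodup deq (map fst Q)). set (B := nodup deq (map snd Q)).
  eapply Rle_trans.
  { apply (sumR_incl_le _ Q (list_prod A B)); [intros; apply Cnorm_nonneg | auto |].
    intros [x y] Hxy. apply in_prod; apply nodup_In.
    - change x with (fst (x, y)); apply in_map; auto.
    - change y with (snd (x, y)); apply in_map; auto. }
  rewrite (sumR_ext _ (fun p => Cnorm (f (fst p)) * Cnorm (g (snd p)))) by (intros; apply Cnorm_mul).
  rewrite (sumR_prod (fun x => Cnorm (f x)) (fun y => Cnorm (g y))).
  pose proof (sumR_nonneg (fun x => Cnorm (f x)) A (fun x => Cnorm_nonneg _)).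
  pose proof (sumR_nonneg (fun y => Cnorm (g y)) B (fun y => Cnorm_nonneg _)).
  apply Rmult_le_compat; auto; [apply HMf | apply HMg]; apply NoDup_nodup.
Qed.

Lemma Chas_prod {X Y} (f : X -> Cx) (g : Y -> Cx) a b Mf Mg :
  Chas_sum f a -> Chas_sum g b -> abs_summable f Mf -> abs_summable g Mg ->
  Chas_sum (fun p : X * Y => Cmul (f (fst p)) (g (snd p))) (Cmul a b).
Proof.
  intros Hf Hg HMf HMg.
  destruct (Chas_exists _ _ (abs_summable_prod f g Mf Mg HMf HMg)) as [c Hc].
  assert (Hrow : forall x : X, Chas_sum (fun q : {p : X * Y | fst p = x} =>
      Cmul (f (fst (proj1_sig q))) (g (snd (proj1_sig q)))) (Cmul (f x) b)).
  { intro x. eapply Chas_ext.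
    2:{ apply (Chas_transfer (fun q : {p : X * Y | fst p = x} => snd (proj1_sig q))
               (fun y => exist (fun p : X * Y => fst p = x) (x, y) eq_refl)).
        - intros [[x1 y1] e1] [[x2 y2] e2]; simpl in *. intros ->. subst.
          reflexivity.
        - reflexivity.
        - apply Chas_scal. exact Hg. }
    intros [[x1 y1] e1]. simpl in *. subst. reflexivity. }
  assert (Hcol : Chas_sum (fun x => Cmul (f x) b) (Cmul a b)).
  { replace (Cmul a b) with (Cmul b a) by Csolve.
    eapply Chas_ext; [| apply (Chas_scal b f a Hf)]. intro; Csolve. }
  rewrite <- (Chas_unique _ _ _ (Chas_fibres fst _ _ Hrow c Hc) Hcol). exact Hc.
Qed.

(** * The weighted l^1 space *)
Section WeightedL1.
Context {S : Type} (w : S -> R) (Hw : is_weight w).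

Lemma l1_bound_nonneg a r : l1_norm_le w a r -> 0 <= r.
Proof. intro H. apply (H nil). constructor. Qed.

Lemma l1_dom (a b : S -> Cx) r :
  (forall s, Cnorm (b s) <= Cnorm (a s)) -> l1_norm_le w a r -> l1_norm_le w b r.
Proof.
  intros Hd Ha G HG. eapply Rle_trans; [| apply (Ha G HG)]. apply sumR_le. intros x _.
  apply Rmult_le_compat_r; [left; apply Hw | auto].
Qed.

Lemma in_l1_dom (a b : S -> Cx) :
  (forall s, Cnorm (b s) <= Cnorm (a s)) -> in_l1 w a -> in_l1 w b.
Proof. intros Hd [r Hr]. exists r. eapply l1_dom; eauto. Qed.

Lemma l1_scal (a : S -> Cx) lam r :
  l1_norm_le w a r -> l1_norm_le w (fun s => Cmul lam (a s)) (Cnorm lam * r).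
Proof.
  intros Ha G HG. rewrite (sumR_ext _ (fun s => Cnorm lam * (Cnorm (a s) * w s))).
  - rewrite sumR_scal. apply Rmult_le_compat_l; [apply Cnorm_nonneg | auto].
  - intros; rewrite Cnorm_mul; ring.
Qed.

Definition pmass (x : S) : S -> Cx := fun s => if deq s x then C1 else C0.

Lemma pmass_l1 x : l1_norm_le w (pmass x) (w x).
Proof.
  intros G HG. eapply Rle_trans; [apply (sumR_supp_le _ [x]) |].
  - intros; apply Rmult_le_pos; [apply Cnorm_nonneg | left; apply Hw].
  - intros s Hs. unfold pmass. destruct (deq s x); [subst; simpl in Hs; tauto |].
    rewrite Cnorm_C0; ring.
  - auto.
  - simpl. unfold pmass. destruct (deq x x); [| congruence]. rewrite Cnorm_C1. lra.
Qed.

Definition point (x : S) : l1 w := exist _ (pmass x) (ex_intro _ (w x) (pmass_l1 x)).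

Definition restrict (G : list S) (a : S -> Cx) : S -> Cx :=
  fun s => if memb G s then a s else C0.
Definition corestrict (G : list S) (a : S -> Cx) : S -> Cx :=
  fun s => if memb G s then C0 else a s.

Lemma restrict_dom G a s : Cnorm (restrict G a s) <= Cnorm (a s).
Proof.
  unfold restrict. destruct (memb G s); [lra |]. rewrite Cnorm_C0. apply Cnorm_nonneg.
Qed.

Lemma corestrict_dom G a s : Cnorm (corestrict G a s) <= Cnorm (a s).
Proof.
  unfold corestrict. destruct (memb G s); [| lra]. rewrite Cnorm_C0. apply Cnorm_nonneg.
Qed.

Lemma corestrict_small a G F0 eta : incl F0 G ->
  (forall H, NoDup H -> (forall x, In x H -> ~ In x F0) ->
     sumR (fun s => Cnorm (a s) * w s) H <= eta) ->
  l1_norm_le w (corestrict G a) eta.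
Proof.
  intros HF0 Htail H HH. rewrite (sumR_filter _ (memb G) H).
  rewrite (sumR_ext _ (fun _ => 0) (filter (memb G) H)).
  2:{ intros s Hs. apply filter_In in Hs as [_ Hs].
      unfold corestrict. rewrite Hs, Cnorm_C0. ring. }
  rewrite (sumR_ext _ (fun s => Cnorm (a s) * w s) (filter (fun x => negb (memb G x)) H)).
  2:{ intros s Hs. apply filter_In in Hs as [_ Hs].
      unfold corestrict. destruct (memb G s); [discriminate | reflexivity]. }
  assert (Hz : sumR (fun _ : S => 0) (filter (memb G) H) = 0)
    by (induction (filter _ H) as [| ? ? IH]; simpl; [| rewrite IH]; ring).
  rewrite Hz, Rplus_0_l. apply Htail; [apply NoDup_filter; auto |].
  intros s Hs Hs0. apply filter_In in Hs as [_ Hs].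
  assert (memb G s = true) by (apply memb_true; auto). rewrite H0 in Hs. discriminate.
Qed.

(** Weights on a semilattice are at least 1: w x = w (x x) <= (w x)^2. *)
Lemma weight_ge1 (op : S -> S -> S) : is_semilattice S op -> submultiplicative op w ->
  forall x, 1 <= w x.
Proof.
  intros [_ [_ Hid]] Hs x. pose proof (Hs x x) as H. rewrite Hid in H. pose proof (Hw x).
  apply Rmult_le_reg_l with (w x); lra.
Qed.

Section Functional.
Context (psi : l1 w -> Cx) (Hpsi : bounded_linear w psi).

Lemma psi_scal lam (a c : l1 w) :
  (forall s, proj1_sig c s = Cmul lam (proj1_sig a s)) -> psi c = Cmul lam (psi a).
Proof. destruct Hpsi as [_ [H _]]. apply H. Qed.

Lemma psi_add (a b c : l1 w) :
  (forall s, proj1_sig c s = Cadd (proj1_sig a s) (proj1_sig b s)) ->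
  psi c = Cadd (psi a) (psi b).
Proof. destruct Hpsi as [H _]. apply H. Qed.

Lemma psi_zero (c : l1 w) : (forall s, proj1_sig c s = C0) -> psi c = C0.
Proof. intros H. rewrite (psi_scal C0 c c); [Csolve |]. intros s. rewrite H. Csolve. Qed.

Lemma psi_bound : exists M, 0 <= M /\
  forall (a : l1 w) r, l1_norm_le w (proj1_sig a) r -> Cnorm (psi a) <= M * r.
Proof.
  destruct Hpsi as [_ [_ [M HM]]]. exists (Rmax M 0). split; [apply Rmax_r |].
  intros a r Hr. eapply Rle_trans; [apply (HM a r Hr) |]. apply Rmult_le_compat_r.
  - eapply l1_bound_nonneg; eauto.
  - apply Rmax_l.
Qed.

Definition u (s : S) : Cx := psi (point s).

Lemma psi_finite (a : S -> Cx) (Ha : in_l1 w a) G : NoDup G -> forall c : l1 w,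
  (forall s, proj1_sig c s = restrict G a s) -> psi c = sumC (fun s => Cmul (a s) (u s)) G.
Proof.
  induction G as [| x G IH]; intros HG c Hc.
  - apply psi_zero. intros s. rewrite Hc. reflexivity.
  - inversion HG as [| ? ? Hx HG']; subst.
    assert (D1 : in_l1 w (fun s => Cmul (a x) (pmass x s))).
    { apply (in_l1_dom a); auto. intros s. unfold pmass. rewrite Cnorm_mul.
      destruct (deq s x); [subst; rewrite Cnorm_C1; lra |].
      rewrite Cnorm_C0, Rmult_0_r. apply Cnorm_nonneg. }
    assert (D2 : in_l1 w (restrict G a)) by (apply (in_l1_dom a); auto; apply restrict_dom).
    rewrite (psi_add (exist _ _ D1) (exist _ _ D2) c).
    + rewrite (IH HG' (exist _ _ D2)) by reflexivity.
      rewrite (psi_scal (a x) (point x) (exist _ _ D1)) by reflexivity. reflexivity.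
    + intros s. rewrite Hc. simpl. unfold restrict, pmass.
      destruct (deq s x) as [-> | ne].
      * rewrite (proj2 (memb_true (x :: G) x)) by (left; auto).
        rewrite (proj2 (memb_false G x)) by auto. Csolve.
      * destruct (memb G s) eqn:E.
        -- rewrite (proj2 (memb_true (x :: G) s)) by (right; apply memb_true; auto). Csolve.
        -- rewrite (proj2 (memb_false (x :: G) s)); [Csolve |].
           intros [h | h]; [congruence | apply memb_false in E; auto].
Qed.

Lemma psi_expand (a : l1 w) : Chas_sum (fun s => Cmul (proj1_sig a s) (u s)) (psi a).
Proof.
  destruct psi_bound as [M [HM0 HM]].
  destruct a as [a Ha0]. simpl. pose proof Ha0 as [r Hr]. intros eps He.
  set (eta := eps / (2 * (M + 1))).
  assert (Heta : 0 < eta) by (apply Rdiv_lt_0_compat; lra).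
  destruct (tail_small (fun s => Cnorm (a s) * w s) r) with (eta := eta) as [F0 [HF0 HT]]; auto.
  { intros; apply Rmult_le_pos; [apply Cnorm_nonneg | left; apply Hw]. }
  exists F0. intros G HG Hi.
  assert (H1 : in_l1 w (restrict G a)) by (apply (in_l1_dom a); auto; apply restrict_dom).
  assert (H2 : in_l1 w (corestrict G a)) by (apply (in_l1_dom a); auto; apply corestrict_dom).
  set (c1 := exist (in_l1 w) _ H1). set (c2 := exist (in_l1 w) _ H2).
  rewrite (psi_add c1 c2 (exist (fun a0 => in_l1 w a0) a Ha0)).
  2:{ intros s. simpl. unfold restrict, corestrict. destruct (memb G s); Csolve. }
  rewrite <- (psi_finite a Ha0 G HG c1) by reflexivity.
  rewrite Cnorm_sub_sym.
  replace (Csub (Cadd (psi c1) (psi c2)) (psi c1)) with (psi c2) by Csolve.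
  pose proof (HM c2 _ (corestrict_small a G F0 eta Hi HT)).
  assert (M * eta < eps).
  { unfold eta. replace (M * (eps / (2 * (M + 1)))) with (eps * (M / (2 * (M + 1))))
      by (field; lra).
    assert (M / (2 * (M + 1)) < 1).
    { apply Rmult_lt_reg_r with (2 * (M + 1)); [lra |].
      unfold Rdiv. rewrite Rmult_assoc, Rinv_l by lra. lra. }
    nra. }
  lra.
Qed.
End Functional.
End WeightedL1.

(** * Multiplicative functionals from semicharacters *)
Section Semicharacter.
Context {S : Type} (op : S -> S -> S) (w : S -> R) (Hw : is_weight w)
  (HS : is_semilattice S op) (Hsub : submultiplicative op w)
  (chi : S -> Cx) (chi_disc : forall s, Cnorm (chi s) <= 1)
  (chi_mul : forall x y, chi (op x y) = Cmul (chi x) (chi y)).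

(** As weights are >= 1, chi a is absolutely summable with the l^1 bound of a. *)
Lemma chi_abs_summable a r : l1_norm_le w a r ->
  abs_summable (fun s => Cmul (chi s) (a s)) r.
Proof.
  intros Ha G HG. eapply Rle_trans; [| apply (Ha G HG)]. apply sumR_le. intros s _.
  rewrite Cnorm_mul. pose proof (chi_disc s). pose proof (Cnorm_nonneg (chi s)).
  pose proof (Cnorm_nonneg (a s)). pose proof (weight_ge1 w Hw op HS Hsub s). nra.
Qed.

Lemma phi_exists (a : l1 w) : exists l, Chas_sum (fun s => Cmul (chi s) (proj1_sig a s)) l.
Proof. destruct a as [a [r Hr]]. exact (Chas_exists _ _ (chi_abs_summable a r Hr)). Qed.

Definition phi (a : l1 w) : Cx :=
  proj1_sig (constructive_indefinite_description _ (phi_exists a)).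

Lemma phi_spec a : Chas_sum (fun s => Cmul (chi s) (proj1_sig a s)) (phi a).
Proof. exact (proj2_sig (constructive_indefinite_description _ (phi_exists a))). Qed.

(** Multiplicativity: sum over s of chi(s) (a*b)(s) regroups, along the fibres
    of the product map, into the product of the sums for a and b. *)
Lemma phi_mul (a b c : l1 w) : is_conv op (proj1_sig a) (proj1_sig b) (proj1_sig c) ->
  phi c = Cmul (phi a) (phi b).
Proof.
  destruct a as [a [ra Ha]], b as [b [rb Hb]]. intros Hc. simpl in Hc.
  pose proof (Chas_prod _ _ _ _ _ _ (phi_spec (exist _ a (ex_intro _ ra Ha)))
    (phi_spec (exist _ b (ex_intro _ rb Hb))) (chi_abs_summable a ra Ha)
    (chi_abs_summable b rb Hb)) as Hp.
  apply (Chas_unique _ _ _ (phi_spec _)).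
  apply (Chas_fibres (fun p : S * S => op (fst p) (snd p)) _ _) with (2 := Hp).
  intros s. eapply Chas_ext; [| apply (Chas_scal (chi s) _ _ (Hc s))].
  intros [[x y] e]. simpl in *. subst s. rewrite chi_mul. Csolve.
Qed.

Lemma phi_multiplicative : multiplicative_functional op w phi.
Proof.
  split; [split; [| split] | exact phi_mul].
  - intros a b c Hc. apply (Chas_unique _ _ _ (phi_spec c)).
    eapply Chas_ext; [| apply (Chas_add _ _ _ _ (phi_spec a) (phi_spec b))].
    intros s. simpl. rewrite Hc. Csolve.
  - intros lam a c Hc. apply (Chas_unique _ _ _ (phi_spec c)).
    eapply Chas_ext; [| apply (Chas_scal lam _ _ (phi_spec a))].
    intros s. simpl. rewrite Hc. Csolve.
  - exists 1. intros a r Hr. rewrite Rmult_1_l.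
    exact (Chas_bound _ _ _ (phi_spec a) (chi_abs_summable _ _ Hr)).
Qed.

Lemma phi_dual_dist (psi : l1 w -> Cx) (Hpsi : bounded_linear w psi) eps : 0 <= eps ->
  (forall s, Cnorm (Csub (u w Hw psi s) (chi s)) <= eps * w s) -> dual_dist_le w psi phi eps.
Proof.
  intros He Hd a Ha.
  pose proof (Chas_add _ _ _ _ (psi_expand w Hw psi Hpsi a)
    (Chas_scal (Cr (-1)) _ _ (phi_spec a))) as H.
  replace (Csub (psi a) (phi a)) with (Cadd (psi a) (Cmul (Cr (-1)) (phi a))) by Csolve.
  replace eps with (eps * 1) by ring.
  apply (Chas_bound _ _ _ H). intros G HG.
  eapply Rle_trans; [| apply Rmult_le_compat_l; [exact He | apply (Ha G HG)]].
  rewrite <- sumR_scal. apply sumR_le. intros s _.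
  replace (Cadd (Cmul (proj1_sig a s) (u w Hw psi s)) (Cmul (Cr (-1)) (Cmul (chi s) (proj1_sig a s))))
    with (Cmul (proj1_sig a s) (Csub (u w Hw psi s) (chi s))) by Csolve.
  rewrite Cnorm_mul. pose proof (Hd s). pose proof (Cnorm_nonneg (proj1_sig a s)). nra.
Qed.
End Semicharacter.

Lemma conv_pmass {S} (op : S -> S -> S) (al be : Cx) x y :
  is_conv op (fun s => Cmul al (pmass x s)) (fun s => Cmul be (pmass y s))
    (fun s => Cmul (Cmul al be) (pmass (op x y) s)).
Proof.
  intros s. destruct (deq (op x y) s) as [e | ne].
  - set (q0 := exist (fun p : S * S => op (fst p) (snd p) = s) (x, y) e).
    match goal with |- Chas_sum ?f ?v => replace v with (sumC f [q0]) end.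
    + apply (Chas_finite _ [q0]); [repeat constructor; simpl; auto |].
      intros [[x1 y1] e1] Hq. simpl. unfold pmass.
      destruct (deq x1 x), (deq y1 y); try Csolve.
      subst. exfalso. apply Hq. left. unfold q0. f_equal. apply proof_irrelevance.
    + simpl. unfold pmass. subst s.
      destruct (deq x x), (deq y y), (deq (op x y) (op x y)); try congruence. Csolve.
  - match goal with |- Chas_sum ?f ?v => replace v with (sumC f []) end.
    + apply (Chas_finite _ []); [constructor |].
      intros [[x1 y1] e1] _. simpl. unfold pmass.
      destruct (deq x1 x), (deq y1 y); try Csolve. subst; simpl in *; congruence.
    + simpl. unfold pmass. destruct (deq s (op x y)); [congruence | Csolve].
Qed.

Section PointDefect.
Context {S : Type} (op : S -> S -> S) (w : S -> R) (Hw : is_weight w)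
  (psi : l1 w -> Cx) (Hpsi : bounded_linear w psi).

Lemma unit_pmass_l1 x : l1_norm_le w (fun s => Cmul (Cr (/ w x)) (pmass x s)) 1.
Proof.
  pose proof (Hw x). replace 1 with (Cnorm (Cr (/ w x)) * w x).
  - apply (l1_scal w), (pmass_l1 w Hw).
  - rewrite Cnorm_Cr, Rabs_right; [field; lra | left; apply Rinv_0_lt_compat; lra].
Qed.

Lemma point_defect dl (Hdef : defect_le op w psi dl) x y :
  Cnorm (Csub (u w Hw psi (op x y)) (Cmul (u w Hw psi x) (u w Hw psi y))) <= dl * w x * w y.
Proof.
  pose proof (Hw x) as wx. pose proof (Hw y) as wy.
  set (al := Cr (/ w x)). set (be := Cr (/ w y)).
  assert (Ec : in_l1 w (fun s => Cmul (Cmul al be) (pmass (op x y) s))).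
  { eexists. apply (l1_scal w), (pmass_l1 w Hw). }
  set (ex := exist (in_l1 w) _ (ex_intro _ 1 (unit_pmass_l1 x))).
  set (ey := exist (in_l1 w) _ (ex_intro _ 1 (unit_pmass_l1 y))).
  set (ec := exist (in_l1 w) _ Ec).
  pose proof (Hdef ex ey ec (unit_pmass_l1 x) (unit_pmass_l1 y) (conv_pmass op al be x y)) as D.
  rewrite (psi_scal w psi Hpsi al (point w Hw x) ex),
    (psi_scal w psi Hpsi be (point w Hw y) ey),
    (psi_scal w psi Hpsi (Cmul al be) (point w Hw (op x y)) ec) in D by reflexivity.
  fold (u w Hw psi x) (u w Hw psi y) (u w Hw psi (op x y)) in D.
  set (N := Cnorm (Csub (u w Hw psi (op x y)) (Cmul (u w Hw psi x) (u w Hw psi y)))).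
  replace (Csub (Cmul (Cmul al be) (u w Hw psi (op x y)))
            (Cmul (Cmul al (u w Hw psi x)) (Cmul be (u w Hw psi y))))
    with (Cmul (Cmul al be) (Csub (u w Hw psi (op x y)) (Cmul (u w Hw psi x) (u w Hw psi y))))
    in D by Csolve.
  rewrite Cnorm_mul in D. fold N in D. unfold al, be in D.
  rewrite Cnorm_mul, !Cnorm_Cr, !Rabs_right in D
    by (left; apply Rinv_0_lt_compat; lra).
  replace N with ((/ w x * / w y * N) * (w x * w y)) by (field; lra).
  replace (dl * w x * w y) with (dl * (w x * w y)) by ring.
  pose proof (Cnorm_nonneg (Csub (u w Hw psi (op x y)) (Cmul (u w Hw psi x) (u w Hw psi y)))).
  apply Rmult_le_compat_r; nra.
Qed.
End PointDefect.

(** * Stability of almost multiplicative functions on semilattices *)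

Definition near01 (mu : R) (z : Cx) : Prop := Cnorm z <= mu \/ Cnorm (Csub C1 z) <= mu.

(** |z - z^2| = |z| |1 - z| <= mu^2 forces z within mu of 0 or 1. *)
Lemma almost_idempotent_near01 mu z : 0 <= mu ->
  Cnorm (Csub z (Cmul z z)) <= mu * mu -> near01 mu z.
Proof.
  intros Hmu H.
  replace (Csub z (Cmul z z)) with (Cmul z (Csub C1 z)) in H by Csolve.
  rewrite Cnorm_mul in H. pose proof (Cnorm_nonneg z). pose proof (Cnorm_nonneg (Csub C1 z)).
  destruct (Rle_dec (Cnorm z) mu) as [Hz | Hz]; [left; exact Hz | right].
  apply Rnot_lt_le. intro. apply Hz. nra.
Qed.

Lemma near01_bound mu z : 0 <= mu -> near01 mu z -> Cnorm z <= 1 + mu.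
Proof.
  intros H [H1 | H1]; [lra |].
  pose proof (Cnorm_near1 z). lra.
Qed.

(** For a, b, c each near 0 or 1, with c within mu^2 of ab: c is near 1 iff both a
    and b are (for mu <= 1/8 the two alternatives are far apart). *)
Lemma near1_mul_iff a b c mu : 0 < mu -> mu <= 1 / 8 -> Cnorm (Csub c (Cmul a b)) <= mu * mu ->
  near01 mu a -> near01 mu b -> near01 mu c ->
  (Cnorm (Csub C1 c) <= mu <-> Cnorm (Csub C1 a) <= mu /\ Cnorm (Csub C1 b) <= mu).
Proof.
  intros H0 H8 HE Da Db Dc.
  pose proof (near01_bound mu a (Rlt_le _ _ H0) Da) as Ba.
  pose proof (near01_bound mu b (Rlt_le _ _ H0) Db) as Bb.
  pose proof (Cnorm_near1 c) as Nc.
  pose proof (Cnorm_nonneg a); pose proof (Cnorm_nonneg b); pose proof (Cnorm_nonneg c).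
  assert (Hc : Cnorm c <= mu * mu + Cnorm a * Cnorm b).
  { pose proof (Cnorm_ge_sub c (Cmul a b)) as T. rewrite Cnorm_mul in T. lra. }
  split.
  - intro HC. split.
    + destruct Da as [Da | Da]; auto. exfalso.
      assert (Cnorm a * Cnorm b <= mu * (1 + mu)) by (apply Rmult_le_compat; lra). nra.
    + destruct Db as [Db | Db]; auto. exfalso.
      assert (Cnorm a * Cnorm b <= (1 + mu) * mu) by (apply Rmult_le_compat; lra). nra.
  - intros [HA HB].
    assert (H1ab : Cnorm (Csub C1 (Cmul a b)) <= mu + (1 + mu) * mu).
    { replace (Csub C1 (Cmul a b)) with (Cadd (Csub C1 a) (Cmul a (Csub C1 b))) by Csolve.
      eapply Rle_trans; [apply Cnorm_triangle |]. rewrite Cnorm_mul.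
      assert (Cnorm a * Cnorm (Csub C1 b) <= (1 + mu) * mu)
        by (apply Rmult_le_compat; try lra; apply Cnorm_nonneg).
      lra. }
    pose proof (Cnorm_sub_tri C1 (Cmul a b) c) as T. rewrite (Cnorm_sub_sym (Cmul a b) c) in T.
    destruct Dc as [Dc | Dc]; auto. exfalso. nra.
Qed.

Lemma almost_idempotent_large_weight z c W eps d : 0 < eps -> 0 <= d <= eps * eps / 8 ->
  eps * W > 4 -> Cnorm (Csub z (Cmul z z)) <= d * W * W -> Cnorm c <= 1 ->
  Cnorm (Csub z c) <= eps * W.
Proof.
  intros He Hd HW Hz Hc.
  assert (HW0 : 0 < W) by (destruct (Rle_dec W 0); [nra | lra]).
  pose proof (Cnorm_ge_sub (Cmul z z) z) as Hge.
  rewrite Cnorm_mul, Cnorm_sub_sym in Hge.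
  assert (Hdw : d * W * W <= eps * eps / 8 * W * W)
    by (apply Rmult_le_compat_r; [lra |]; apply Rmult_le_compat_r; lra).
  assert (Hsmall : Cnorm z <= eps / 2 * W).
  { set (t := Cnorm z) in *. pose proof (Cnorm_nonneg z) as Ht. fold t in Ht.
    apply Rnot_lt_le. intro Hlt.
    assert (t * (t - 1) >= t * (t / 2)) by nra.
    assert (t * (t / 2) > eps / 2 * W * (eps / 2 * W) / 2) by nra.
    nra. }
  pose proof (Cnorm_sub_le z c). lra.
Qed.

Lemma semilattice_ac4 {S} (op : S -> S -> S) : is_semilattice S op -> forall a b c d,
  op (op a b) (op c d) = op (op a c) (op b d).
Proof.
  intros [As [Co _]] a b c d.
  rewrite <- As, (As b c d), (Co b c), <- (As c b d), As. reflexivity.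
Qed.

Section GeneratedFilter.
Context {S : Type} (op : S -> S -> S) (HS : is_semilattice S op) (F : S -> Prop).
Hypothesis F_mul : forall x y, F x -> F y -> F (op x y).

(** The filter generated by a multiplicatively closed set [F]: the elements
    lying above some element of [F] in the order y <= s iff y s = y. *)
Definition above (s : S) : Prop := exists y, F y /\ op y s = y.

Lemma above_mul s t : above (op s t) <-> above s /\ above t.
Proof.
  destruct HS as [HA [HC HI]]. split.
  - intros [y [Fy Ey]]. split; exists y; split; auto; rewrite <- Ey at 1; rewrite <- HA.
    + rewrite (HC (op s t) s), (HA s s t), HI. exact Ey.
    + rewrite <- (HA s t t), HI. exact Ey.
  - intros [[y1 [F1 E1]] [y2 [F2 E2]]]. exists (op y1 y2). split; [apply F_mul; auto |].
    rewrite (semilattice_ac4 op HS), E1, E2. reflexivity.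
Qed.
End GeneratedFilter.

Definition indicator {S : Type} (P : S -> Prop) (s : S) : Cx :=
  if excluded_middle_informative (P s) then C1 else C0.

Lemma indicator_disc {S} (P : S -> Prop) s : Cnorm (indicator P s) <= 1.
Proof.
  unfold indicator. destruct (excluded_middle_informative (P s));
    [rewrite Cnorm_C1 | rewrite Cnorm_C0]; lra.
Qed.

Lemma indicator_mul {S} (op : S -> S -> S) (P : S -> Prop) :
  (forall s t, P (op s t) <-> P s /\ P t) ->
  forall s t, indicator P (op s t) = Cmul (indicator P s) (indicator P t).
Proof.
  intros HP s t. pose proof (HP s t). unfold indicator.
  destruct (excluded_middle_informative (P (op s t))), (excluded_middle_informative (P s)),
    (excluded_middle_informative (P t)); try Csolve; tauto.
Qed.

(** If [u] is within [mu^2] of multiplicative on a subsemilattice [G], the set of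
  points of [G] where [u] is near 1 generates a filter whose indicator is a
  semicharacter within [mu] of [u] on [G]. *)
Section RoundingOnSubsemilattice.
Context {S : Type} (op : S -> S -> S) (HS : is_semilattice S op)
  (G : S -> Prop) (G_mul : forall x y, G x -> G y -> G (op x y))
  (u : S -> Cx) (mu : R) (mu_pos : 0 < mu) (mu_small : mu <= 1 / 8).
Hypothesis u_almost_mul : forall x y, G x -> G y ->
  Cnorm (Csub (u (op x y)) (Cmul (u x) (u y))) <= mu * mu.

Lemma u_near01 x : G x -> near01 mu (u x).
Proof.
  intros Gx. apply almost_idempotent_near01; [lra |].
  destruct HS as [_ [_ HI]]. rewrite <- (HI x) at 1. apply u_almost_mul; auto.
Qed.

Definition near_one (x : S) : Prop := G x /\ Cnorm (Csub C1 (u x)) <= mu.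

Lemma near_one_mul_iff x y : G x -> G y -> (near_one (op x y) <-> near_one x /\ near_one y).
Proof.
  intros Gx Gy. pose proof (G_mul x y Gx Gy) as Gxy.
  pose proof (near1_mul_iff (u x) (u y) (u (op x y)) mu mu_pos mu_small
    (u_almost_mul x y Gx Gy) (u_near01 x Gx) (u_near01 y Gy) (u_near01 _ Gxy)).
  unfold near_one. tauto.
Qed.

Definition rounded : S -> Cx := indicator (above op near_one).

Lemma above_near_one_mul s t :
  above op near_one (op s t) <-> above op near_one s /\ above op near_one t.
Proof.
  apply above_mul; [exact HS |]. intros x y Hx Hy.
  apply near_one_mul_iff; [apply Hx | apply Hy | tauto].
Qed.

Lemma rounded_mul x y : rounded (op x y) = Cmul (rounded x) (rounded y).
Proof. apply indicator_mul, above_near_one_mul. Qed.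

Lemma above_near_one_iff s : G s -> (above op near_one s <-> near_one s).
Proof.
  intros Gs. split.
  - intros [y [Fy Ey]].
    assert (Fys : near_one (op y s)) by (rewrite Ey; exact Fy).
    apply (near_one_mul_iff y s (proj1 Fy) Gs) in Fys. tauto.
  - intros Fs. exists s. split; [exact Fs |]. destruct HS as [_ [_ HI]]. apply HI.
Qed.

Lemma rounded_close s : G s -> Cnorm (Csub (u s) (rounded s)) <= mu.
Proof.
  intros Gs. unfold rounded, indicator.
  destruct (excluded_middle_informative (above op near_one s)) as [Hs | Hs].
  - apply above_near_one_iff in Hs as [_ Hs]; [| exact Gs]. rewrite Cnorm_sub_sym. exact Hs.
  - rewrite Cnorm_sub_C0. destruct (u_near01 s Gs) as [Hu | Hu]; [exact Hu |].
    exfalso. apply Hs, above_near_one_iff; [exact Gs |]. split; auto.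
Qed.
End RoundingOnSubsemilattice.

Lemma defect_on_bounded_weight {S} (op : S -> S -> S) (w : S -> R) (u : S -> Cx)
  (G : S -> Prop) dlt B mu : 0 <= dlt -> (forall x, G x -> 0 <= w x <= B) ->
  dlt * (B * B) <= mu * mu ->
  (forall x y, Cnorm (Csub (u (op x y)) (Cmul (u x) (u y))) <= dlt * w x * w y) ->
  forall x y, G x -> G y -> Cnorm (Csub (u (op x y)) (Cmul (u x) (u y))) <= mu * mu.
Proof.
  intros Hd HB HdB Hu x y Gx Gy. eapply Rle_trans; [apply Hu |].
  destruct (HB x Gx), (HB y Gy).
  assert (w x * w y <= B * B) by (apply Rmult_le_compat; lra). nra.
Qed.

(** The semicharacter is the
    rounding of u on the subsemilattice generated by W_K, K = 4/eps. *)
Lemma almost_multiplicative_stability {S} (op : S -> S -> S) (w : S -> R) (Hw : is_weight w)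
  (HS : is_semilattice S op) (Hsub : submultiplicative op w) (Hfl : flighty op w) :
  forall eps, 0 < eps -> exists delta, 0 < delta /\ forall u : S -> Cx,
   (forall x y, Cnorm (Csub (u (op x y)) (Cmul (u x) (u y))) <= delta * w x * w y) ->
   exists chi : S -> Cx, (forall s, Cnorm (chi s) <= 1) /\
     (forall x y, chi (op x y) = Cmul (chi x) (chi y)) /\
     (forall s, Cnorm (Csub (u s) (chi s)) <= eps * w s).
Proof.
  intros eps He.
  set (mu := Rmin (1 / 8) (eps / 2)).
  assert (Hmu0 : 0 < mu) by (apply Rmin_glb_lt; lra).
  assert (Hmu1 : mu <= 1 / 8) by apply Rmin_l.
  assert (Hmu2 : mu <= eps / 2) by apply Rmin_r.
  set (K := 4 / eps). assert (HK : 0 < K) by (apply Rdiv_lt_0_compat; lra).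
  set (G := gen op (W_K w K)).
  pose proof (weight_ge1 w Hw op HS Hsub) as W1.
  destruct (Hfl K HK) as [B HB].
  set (B' := Rmax B 1).
  assert (HGB : forall x, G x -> 0 <= w x <= B').
  { intros x Gx. pose proof (W1 x). split; [lra |].
    eapply Rle_trans; [apply HB, Gx | apply Rmax_l]. }
  assert (HB1 : 1 <= B') by apply Rmax_r.
  set (dlt := Rmin (eps * eps / 8) (mu * mu / (B' * B'))).
  assert (Hd0 : 0 < dlt) by (apply Rmin_glb_lt; [nra | apply Rdiv_lt_0_compat; nra]).
  assert (Hd1 : dlt <= eps * eps / 8) by apply Rmin_l.
  assert (Hd2 : dlt * (B' * B') <= mu * mu).
  { pose proof (Rmin_r (eps * eps / 8) (mu * mu / (B' * B'))) as Hr. fold dlt in Hr.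
    apply Rmult_le_compat_r with (r := B' * B') in Hr; [| nra].
    unfold Rdiv in Hr. rewrite Rmult_assoc, Rinv_l, Rmult_1_r in Hr by nra. exact Hr. }
  exists dlt. split; [exact Hd0 |]. intros u Hu.
  pose proof (defect_on_bounded_weight op w u G dlt B' mu (Rlt_le _ _ Hd0) HGB Hd2 Hu) as Hg.
  exists (rounded op G u mu). split; [| split].
  - intros s. apply indicator_disc.
  - apply rounded_mul; [exact HS | exact (gen_mul op _) | lra | exact Hmu1 | exact Hg].
  - intros s. pose proof (W1 s). destruct (Rle_dec (w s) K) as [Hs | Hs].
    + pose proof (rounded_close op HS G (gen_mul op _) u mu Hmu0 Hmu1 Hg s (gen_base op _ s Hs)).
      nra.
    + apply (almost_idempotent_large_weight _ _ (w s) eps dlt He (conj (Rlt_le _ _ Hd0) Hd1)).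
      * replace 4 with (eps * K) by (unfold K; field; lra).
        apply Rmult_lt_compat_l; lra.
      * destruct HS as [_ [_ HI]]. rewrite <- (HI s) at 1. apply Hu.
      * apply indicator_disc.
Qed.

Theorem theoremt (S : Type) (op : S -> S -> S) (w : S -> R)
  (HS : is_semilattice S op) (Hw : is_weight w) (Hsub : submultiplicative op w)
  (Hfl : flighty op w) :
  AMNM_l1 op w.
Proof.
  intros eps He.
  destruct (almost_multiplicative_stability op w Hw HS Hsub Hfl eps He) as [dlt [Hd Hstab]].
  exists dlt. split; [exact Hd |]. intros psi Hpsi Hdef.
  destruct (Hstab (u w Hw psi) (point_defect op w Hw psi Hpsi dlt Hdef))
    as [chi [Hdisc [Hmul Hclose]]].
  exists (phi op w Hw HS Hsub chi Hdisc).
  split; [apply phi_multiplicative; exact Hmul |].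
  apply phi_dual_dist; [exact Hpsi | lra | exact Hclose].
Qed.
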